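(* Let $N \ge 1$ agents $[N]=\{1,\dots,N\}$ be given with a distance function $\mathrm{dist}$ as in the context, let $n=\sum_{i=1}^N n_i$, and partition $n\times n$ matrices into $N\times N$ blocks accordingly. Fix $i\in[N]$. Let $L\in\mathbb{R}^{n\times n}$ be $(\tau,\rho)$-stable (with $\tau\ge 1$, $\rho>0$) and $(c_L,\gamma)$-SED with $c_L\ge 1$, $\gamma>0$, and let $M\in\mathbb{R}^{n\times n}$ be $(c_M,\gamma)$-SED away from $i$. Then the (unique) solution $P$ of the Lyapunov equation $P = L^\top P L + M$ is $(c_P,\gamma_P)$-SED away from $i$, where $$c_P = \frac{\|M\|\,\tau^2}{1-e^{-2\rho}} + 2c_M,\qquad \gamma_P = \frac{\rho\,\gamma}{\rho+\ln(N c_L)}.$$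
   Context: $\|\cdot\|$ denotes the Euclidean norm of vectors and the induced $\ell_2$ operator norm of matrices. There are $N$ agents $[N]=\{1,\dots,N\}$ embedded on an undirected graph; $\mathrm{dist}:[N]\times[N]\to\mathbb{R}_{\ge0}$ is the graph (shortest-path) distance, so $\mathrm{dist}(i,i)=0$, $\mathrm{dist}(i,j)=\mathrm{dist}(j,i)$, and $\mathrm{dist}(i,j)\le \mathrm{dist}(i,k)+\mathrm{dist}(k,j)$. Agent $i$ has dimensions $n_i$ (and $m_i$); a matrix $X\in\mathbb{R}^{\sum_i n_i\times\sum_i m_i}$ is partitioned into blocks $[X]_{lj}\in\mathbb{R}^{n_l\times m_j}$. Definition ($(\tau,\rho)$-stability): for $\tau\ge1,\rho>0$, a square matrix $X$ is $(\tau,\rho)$-stable if $\|X^k\|\le \tau e^{-\rho k}$ for all integers $k\ge0$. Definition (SED): the block matrix $X$ is $(c,\gamma)$-SED if $\|[X]_{lj}\|\le c\,e^{-\gamma\,\mathrm{dist}(l,j)}$ for all $l,j\in[N]$. Definition (SED away from $i$): for $i\in[N]$, the block matrix $X$ is $(c,\gamma)$-SED away from $i$ if $\|[X]_{lj}\|\le c\,e^{-\gamma\max(\mathrm{dist}(i,l),\mathrm{dist}(i,j))}$ for all $l,j\in[N]$. *)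

From HB Require Import structures.
From mathcomp Require Import all_boot all_order all_algebra.
From mathcomp Require Import all_classical all_reals all_analysis.
Set Implicit Arguments. Unset Strict Implicit. Unset Printing Implicit Defensive.
Import Order.TTheory GRing.Theory Num.Theory.
Local Open Scope classical_set_scope.
Local Open Scope ring_scope.

(* e : rel 'I_N is the (symmetric) adjacency relation of the undirected graph.
   gdist e i j = the least k < N such that there is an e-path of length k from
   i to j (a path [:: i = x_0; x_1; ...; x_k = j] with e x_t x_{t+1});
   for a connected graph this is the shortest-path distance. *)
Definition gdist (N : nat) (e : rel 'I_N) (i j : 'I_N) : nat :=
  find (fun k => [exists p : k.-tuple 'I_N, path e i p && (last i p == j)])
       (iota 0 N).

Definition graph_dist {R : realType} (N : nat) (e : rel 'I_N) (i j : 'I_N) : R :=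
  (gdist e i j)%:R.

Definition vnorm {R : realType} (m : nat) (v : 'cV[R]_m) : R :=
  Num.sqrt (\sum_(k < m) (v k 0) ^+ 2).

Definition opnorm {R : realType} (m n : nat) (A : 'M[R]_(m, n)) : R :=
  sup ((fun v : 'cV[R]_n => vnorm (A *m v)) @` [set v : 'cV[R]_n | vnorm v <= 1]).

Definition tr_stable {R : realType} (n : nat) (tau rho : R) (X : 'M[R]_n) : Prop :=
  forall k : nat, opnorm (X ^+ k) <= tau * expR (- (rho * k%:R)).

Definition blk {R : realType} (N : nat) (ni : 'I_N -> nat)
  (X : 'M[R]_(\sum_(l < N) ni l)) (l j : 'I_N) : 'M[R]_(ni l, ni j) :=
  @submxblock R N N ni ni X l j.

Definition SED {R : realType} (N : nat) (ni : 'I_N -> nat)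
  (dist : 'I_N -> 'I_N -> R) (c gamma : R) (X : 'M[R]_(\sum_(l < N) ni l)) : Prop :=
  forall l j : 'I_N, opnorm (blk X l j) <= c * expR (- (gamma * dist l j)).

Definition SED_away {R : realType} (N : nat) (ni : 'I_N -> nat)
  (dist : 'I_N -> 'I_N -> R) (i : 'I_N) (c gamma : R)
  (X : 'M[R]_(\sum_(l < N) ni l)) : Prop :=
  forall l j : 'I_N,
    opnorm (blk X l j) <= c * expR (- (gamma * Num.max (dist i l) (dist i j))).

(* Iterating the Lyapunov equation K times gives
   P = (L^K)^T P L^K + \sum_(k < K) (L^k)^T M L^k.
   With D = max (dist i l) (dist i j), the (l, j) block of the k-th term is bounded
   in two ways: spatially by c_M (N c_L)^(2k) e^(-gamma D), because a product of SED
   matrices is SED with the constants multiplied by N, and temporally by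
   ||M|| tau^2 e^(-2 rho k), by stability.  Using the first bound for k <= t/2 and the
   second beyond, where t = gamma D / (rho + ln (N c_L)), both parts are of order
   e^(-rho t) = e^(-gamma_P D), while the remainder (L^K)^T P L^K vanishes as K -> oo. *)

From HB Require Import structures.
From mathcomp Require Import all_boot all_order all_algebra.
From mathcomp Require Import all_classical all_reals all_analysis.
From mathcomp Require Import ring lra zify.
Import Order.TTheory GRing.Theory Num.Theory.
Set Implicit Arguments. Unset Strict Implicit. Unset Printing Implicit Defensive.
Local Open Scope ring_scope.

Section GraphDistance.
Variables (N : nat) (e : rel 'I_N).

Definition walk (a b : 'I_N) (k : nat) :=
  [exists p : k.-tuple 'I_N, path e a p && (last a p == b)].

Lemma gdist_min a b k : (k < N)%N -> walk a b k -> (gdist e a b <= k)%N.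
Proof.
move=> lt_kN wk; rewrite leqNgt; apply/negP => lt_k.
by have := before_find 0 lt_k; rewrite nth_iota // add0n; move: wk; rewrite /walk => ->.
Qed.

Hypothesis connected : forall a b : 'I_N, connect e a b.

Lemma exists_short_walk a b : exists2 k, (k < N)%N & walk a b k.
Proof.
have /connectP [p e_p ->] := connected a b.
case: (shortenP e_p) => p' e_p' uniq_p' _; exists (size p').
  have : (size (a :: p') <= #|'I_N|)%N by rewrite -(card_uniqP uniq_p') max_card.
  by rewrite card_ord.
by apply/existsP; exists (in_tuple p'); rewrite /= e_p' eqxx.
Qed.

Lemma gdist_walk a b : (gdist e a b < N)%N /\ walk a b (gdist e a b).
Proof.
have has_walk : has (walk a b) (iota 0 N).
  by have [k lt_kN wk] := exists_short_walk a b; apply/hasP; exists k; rewrite ?mem_iota.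
have lt_gdist : (gdist e a b < N)%N by move: has_walk; rewrite has_find size_iota.
by split=> //; have := nth_find 0 has_walk; rewrite nth_iota // add0n.
Qed.

Lemma gdist_triangle a b c : (gdist e a c <= gdist e a b + gdist e b c)%N.
Proof.
have [_ /existsP [p1 /andP [e_p1 /eqP last_p1]]] := gdist_walk a b.
have [_ /existsP [p2 /andP [e_p2 last_p2]]] := gdist_walk b c.
have [lt_sum | ge_sum] := ltnP (gdist e a b + gdist e b c) N.
  apply: gdist_min => //; apply/existsP; exists (cat_tuple p1 p2).
  by rewrite /= cat_path e_p1 last_cat last_p1 e_p2.
by apply: leq_trans ge_sum; have [/ltnW] := gdist_walk a c.
Qed.

Lemma gdistxx a : (0 < N)%N -> gdist e a a = 0%N.
Proof.
move=> N_gt0; apply/eqP; rewrite -leqn0; apply: gdist_min => //.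
by apply/existsP; exists [tuple] => /=.
Qed.

End GraphDistance.

Lemma graph_dist_triangle (R : realType) (N : nat) (e : rel 'I_N) :
    (forall a b : 'I_N, connect e a b) -> forall a b c : 'I_N,
  graph_dist e a c <= graph_dist e a b + graph_dist e b c :> R.
Proof. by move=> connected a b c; rewrite -natrD ler_nat gdist_triangle. Qed.

Lemma ord_eq_le1 (N : nat) (a b : 'I_N) : (N <= 1)%N -> a = b.
Proof. by move=> N_le1; apply: val_inj => /=; have := ltn_ord a; have := ltn_ord b; lia. Qed.

Lemma graph_dist_le1 (R : realType) (N : nat) (e : rel 'I_N) (a b : 'I_N) :
  (0 < N)%N -> (N <= 1)%N -> graph_dist e a b = 0 :> R.
Proof. by move=> N_gt0 N_le1; rewrite /graph_dist (ord_eq_le1 a b N_le1) gdistxx. Qed.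

Section EuclideanNorm.
Variable R : realType.

Definition dotv m (u w : 'cV[R]_m) : R := \sum_(k < m) u k 0 * w k 0.

Lemma vnormE m (u : 'cV[R]_m) : vnorm u = Num.sqrt (dotv u u).
Proof. by congr Num.sqrt; apply: eq_bigr => k _; rewrite expr2. Qed.

Lemma dotv_ge0 m (u : 'cV[R]_m) : 0 <= dotv u u.
Proof. by apply: sumr_ge0 => k _; rewrite -expr2 sqr_ge0. Qed.

Lemma vnorm_ge0 m (u : 'cV[R]_m) : 0 <= vnorm u.
Proof. exact: sqrtr_ge0. Qed.

Lemma vnorm_sqr m (u : 'cV[R]_m) : vnorm u ^+ 2 = dotv u u.
Proof. by rewrite vnormE sqr_sqrtr // dotv_ge0. Qed.

Lemma dotvC m (u w : 'cV[R]_m) : dotv u w = dotv w u.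
Proof. by apply: eq_bigr => k _; rewrite mulrC. Qed.

Lemma dotv0l m (w : 'cV[R]_m) : dotv 0 w = 0.
Proof. by rewrite /dotv big1 // => k _; rewrite mxE mul0r. Qed.

Lemma dotvDD m (u w : 'cV[R]_m) :
  dotv (u + w) (u + w) = dotv u u + 2 * dotv u w + dotv w w.
Proof.
by rewrite /dotv mulr_sumr -!big_split /=; apply: eq_bigr => k _; rewrite !mxE; ring.
Qed.

Lemma abs_coord_le_vnorm m (u : 'cV[R]_m) k : `|u k 0| <= vnorm u.
Proof.
rewrite /vnorm -sqrtr_sqr ler_sqrt; last by apply: sumr_ge0 => j _; rewrite sqr_ge0.
by rewrite (bigD1 k) //= lerDl; apply: sumr_ge0 => j _; rewrite sqr_ge0.
Qed.

Lemma vnorm_eq0 m (u : 'cV[R]_m) : vnorm u = 0 -> u = 0.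
Proof.
move=> u0; apply/matrixP => k j; rewrite (ord1 j) mxE; apply/eqP.
by rewrite -normr_le0 -u0 abs_coord_le_vnorm.
Qed.

Lemma vnorm0 m : vnorm (0 : 'cV[R]_m) = 0.
Proof. by rewrite /vnorm big1 ?sqrtr0 // => k _; rewrite mxE expr0n. Qed.

Lemma dotv_le_vnorm m (u w : 'cV[R]_m) : dotv u w <= vnorm u * vnorm w.
Proof.
set a := vnorm u; set b := vnorm w.
have [a0 | a_neq0] := eqVneq a 0; first by rewrite a0 mul0r (vnorm_eq0 a0) dotv0l.
have [b0 | b_neq0] := eqVneq b 0.
  by rewrite b0 mulr0 dotvC (vnorm_eq0 b0) dotv0l.
have ab_gt0 : 0 < a * b by rewrite mulr_gt0 // lt0r ?a_neq0 ?b_neq0 ?vnorm_ge0.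
(* [0 <= |b u - a w|^2 = 2 a b (a b - <u, w>)] *)
have : 0 <= \sum_(k < m) (b * u k 0 - a * w k 0) ^+ 2.
  by apply: sumr_ge0 => k _; rewrite sqr_ge0.
have -> : \sum_(k < m) (b * u k 0 - a * w k 0) ^+ 2 =
    b ^+ 2 * dotv u u - 2 * a * b * dotv u w + a ^+ 2 * dotv w w.
  by rewrite /dotv !mulr_sumr -sumrB -big_split /=; apply: eq_bigr => k _; ring.
rewrite -!vnorm_sqr -/a -/b; nra.
Qed.

Lemma vnormD m (u w : 'cV[R]_m) : vnorm (u + w) <= vnorm u + vnorm w.
Proof.
rewrite vnormE dotvDD -(@ger0_norm _ (vnorm u + vnorm w)) ?addr_ge0 ?vnorm_ge0 //.
rewrite -sqrtr_sqr ler_sqrt ?sqr_ge0 //.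
by have := dotv_le_vnorm u w; rewrite -!vnorm_sqr; nra.
Qed.

Lemma vnormZ m (c : R) (u : 'cV[R]_m) : vnorm (c *: u) = `|c| * vnorm u.
Proof.
rewrite !vnormE -sqrtr_sqr -sqrtrM ?sqr_ge0 //; congr Num.sqrt.
by rewrite /dotv mulr_sumr; apply: eq_bigr => k _; rewrite !mxE; ring.
Qed.

Lemma vnorm_le_sum_abs m (u : 'cV[R]_m) : vnorm u <= \sum_k `|u k 0|.
Proof.
have S_ge0 : 0 <= \sum_k `|u k 0| by apply: sumr_ge0.
rewrite /vnorm -(ger0_norm S_ge0) -sqrtr_sqr ler_sqrt ?sqr_ge0 //.
rewrite [X in _ <= X]expr2 mulr_suml; apply: ler_sum => k _.
rewrite -real_normK ?num_real // expr2 ler_wpM2l //.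
by rewrite (bigD1 k) //= lerDl; apply: sumr_ge0.
Qed.

End EuclideanNorm.

Section OperatorNorm.
Variable R : realType.

Lemma sumr_inj_le (I J : finType) (f : I -> J) (F : J -> R) :
  injective f -> (forall j, 0 <= F j) -> \sum_i F (f i) <= \sum_j F j.
Proof.
move=> f_inj F_ge0; rewrite [X in _ <= X](bigID (mem [set f x | x in predT])) /=.
rewrite -(big_imset _ (in2W f_inj)) /= lerDl; exact: sumr_ge0.
Qed.

Lemma opnorm_has_sup m n (A : 'M[R]_(m, n)) :
  has_sup [set vnorm (A *m v) | v in [set v : 'cV[R]_n | vnorm v <= 1]].
Proof.
split; first by exists (vnorm (A *m 0)), 0; rewrite //= vnorm0 ler01.
exists (\sum_k \sum_j `|A k j|) => _ [v /= v_le1 <-].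
apply: le_trans (vnorm_le_sum_abs _) _; apply: ler_sum => k _.
rewrite mxE; apply: le_trans (ler_norm_sum _ _ _) _; apply: ler_sum => j _.
by rewrite normrM ler_piMr // (le_trans (abs_coord_le_vnorm _ _)).
Qed.

Lemma vnorm_mulmx_le_opnorm m n (A : 'M[R]_(m, n)) v :
  vnorm v <= 1 -> vnorm (A *m v) <= opnorm A.
Proof. by move=> v_le1; apply: (sup_upper_bound (opnorm_has_sup A)); exists v. Qed.

Lemma opnorm_le m n (A : 'M[R]_(m, n)) c :
  (forall v, vnorm v <= 1 -> vnorm (A *m v) <= c) -> opnorm A <= c.
Proof.
move=> A_le; apply: ge_sup; first by case: (opnorm_has_sup A).
by move=> _ [v v_le1 <-]; exact: A_le.
Qed.

Lemma opnorm_ge0 m n (A : 'M[R]_(m, n)) : 0 <= opnorm A.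
Proof.
apply: le_trans (vnorm_ge0 (A *m 0)) (vnorm_mulmx_le_opnorm _ _).
by rewrite vnorm0 ler01.
Qed.

Lemma vnorm_mulmx m n (A : 'M[R]_(m, n)) v : vnorm (A *m v) <= opnorm A * vnorm v.
Proof.
have [v0 | v_neq0] := eqVneq (vnorm v) 0.
  by rewrite (vnorm_eq0 v0) mulmx0 !vnorm0 mulr0.
have v_gt0 : 0 < vnorm v by rewrite lt0r v_neq0 vnorm_ge0.
have := @vnorm_mulmx_le_opnorm _ _ A ((vnorm v)^-1 *: v).
have inv_ge0 : 0 <= (vnorm v)^-1 by rewrite invr_ge0 ltW.
rewrite -scalemxAr !vnormZ (ger0_norm inv_ge0) mulVf // lexx => /(_ isT).
by rewrite ler_pdivrMl // mulrC.
Qed.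

Lemma opnorm_mulmx m n p (A : 'M[R]_(m, n)) (B : 'M[R]_(n, p)) :
  opnorm (A *m B) <= opnorm A * opnorm B.
Proof.
apply: opnorm_le => v v_le1; rewrite -mulmxA.
apply: le_trans (vnorm_mulmx A _) _; rewrite ler_wpM2l ?opnorm_ge0 //.
apply: le_trans (vnorm_mulmx B v) _.
by rewrite -[X in _ <= X]mulr1 ler_wpM2l ?opnorm_ge0.
Qed.

Lemma opnormD m n (A B : 'M[R]_(m, n)) : opnorm (A + B) <= opnorm A + opnorm B.
Proof.
apply: opnorm_le => v v_le1; rewrite mulmxDl.
by apply: le_trans (vnormD _ _) _; apply: lerD; apply: vnorm_mulmx_le_opnorm.
Qed.

Lemma opnorm_sum m n (I : finType) (P : pred I) (F : I -> 'M[R]_(m, n)) :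
  opnorm (\sum_(i | P i) F i) <= \sum_(i | P i) opnorm (F i).
Proof.
apply: (big_ind2 (fun A c => opnorm A <= c)).
- by apply: opnorm_le => v _; rewrite mul0mx vnorm0.
- by move=> A1 c1 A2 c2 le1 le2; apply: le_trans (opnormD _ _) (lerD le1 le2).
- by [].
Qed.

Lemma dotv_trmx m n (A : 'M[R]_(m, n)) v w : dotv (A^T *m v) w = dotv v (A *m w).
Proof.
have dotvE k (u u' : 'cV[R]_k) : dotv u u' = (u^T *m u') 0 0.
  by rewrite mxE; apply: eq_bigr => j _; rewrite mxE.
by rewrite !dotvE trmx_mul trmxK mulmxA.
Qed.

Lemma opnorm_trmx m n (A : 'M[R]_(m, n)) : opnorm A^T <= opnorm A.
Proof.
apply: opnorm_le => v v_le1; set w := A^T *m v.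
have : vnorm w ^+ 2 <= opnorm A * vnorm w.
  rewrite vnorm_sqr {1}/w dotv_trmx; apply: le_trans (dotv_le_vnorm _ _) _.
  apply: le_trans (ler_wpM2r (vnorm_ge0 _) v_le1) _.
  by rewrite mul1r vnorm_mulmx.
by have := vnorm_ge0 w; have := opnorm_ge0 A; nra.
Qed.

Lemma opnorm_rowsub1 m m' (f : 'I_m' -> 'I_m) : injective f ->
  opnorm (rowsub f (1%:M : 'M[R]_m)) <= 1.
Proof.
move=> f_inj; apply: opnorm_le => v v_le1; rewrite -rowsubE; apply: le_trans v_le1.
rewrite ler_sqrt; last by apply: sumr_ge0 => j _; rewrite sqr_ge0.
under eq_bigr do rewrite mxE.
exact: sumr_inj_le f_inj (fun j => sqr_ge0 _).
Qed.

Lemma opnorm_mxsub m n m' n' (f : 'I_m' -> 'I_m) (g : 'I_n' -> 'I_n)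
    (A : 'M[R]_(m, n)) :
  injective f -> injective g -> opnorm (mxsub f g A) <= opnorm A.
Proof.
move=> f_inj g_inj.
have -> : mxsub f g A = rowsub f 1%:M *m A *m (rowsub g 1%:M)^T.
  rewrite trmx_mxsub trmx1 mulmx_colsub -rowsubE mulmx1.
  by apply/matrixP => a b; rewrite !mxE.
apply: le_trans (opnorm_mulmx _ _) _.
apply: le_trans (ler_wpM2l (opnorm_ge0 _)
  (le_trans (opnorm_trmx _) (opnorm_rowsub1 g_inj))) _.
rewrite mulr1; apply: le_trans (opnorm_mulmx _ _) _.
by rewrite -[X in _ <= X]mul1r ler_wpM2r ?opnorm_ge0 ?opnorm_rowsub1.
Qed.

Lemma opnorm_trmx_mul3 p q r s (X : 'M[R]_(p, q)) (Y : 'M[R]_(p, r))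
    (Z : 'M[R]_(r, s)) :
  opnorm (X^T *m Y *m Z) <= opnorm X * opnorm Y * opnorm Z.
Proof.
apply: le_trans (opnorm_mulmx _ _) _; rewrite ler_wpM2r ?opnorm_ge0 //.
apply: le_trans (opnorm_mulmx _ _) _; rewrite ler_wpM2r ?opnorm_ge0 //.
exact: opnorm_trmx.
Qed.

End OperatorNorm.

Section Blocks.
Variables (R : realType) (N : nat) (ni : 'I_N -> nat).
Local Notation MM := 'M[R]_(\sum_(l < N) ni l).

Lemma blk_mulmx (X Y : MM) l j : blk (X *m Y) l j = \sum_a blk X l a *m blk Y a j.
Proof.
have := mul_mxblock (fun l j => submxblock X l j) (fun l j => submxblock Y l j).
by rewrite !submxblockK => ->; rewrite /blk mxblockK.
Qed.

Lemma blk_trmx (X : MM) l j : blk X^T l j = (blk X j l)^T.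
Proof. by rewrite /blk tr_submxblock. Qed.

Lemma opnorm_blk_le (X : MM) l j : opnorm (blk X l j) <= opnorm X.
Proof.
have Rank_inj l' : injective (@tagnat.Rank N ni l').
  move=> k k' eq_kk'; apply/val_inj/eqP.
  by have := tagnat.eq_Rank k k'; rewrite eq_kk' !eqxx.
exact: opnorm_mxsub.
Qed.

End Blocks.

Lemma expRN_mul_le (R : realType) (g a b c : R) : 0 <= g -> c <= a + b ->
  expR (- (g * a)) * expR (- (g * b)) <= expR (- (g * c)).
Proof. by move=> g_ge0 le_cab; rewrite -expRD ler_expR; nra. Qed.

Section SpatialDecay.
Variables (R : realType) (N : nat) (ni : 'I_N -> nat).
Variables (dist : 'I_N -> 'I_N -> R) (gamma : R).
Hypothesis dist_ge0 : forall a b, 0 <= dist a b.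
Hypothesis dist_triangle : forall a b c, dist a c <= dist a b + dist b c.
Hypothesis gamma_ge0 : 0 <= gamma.
Local Notation MM := 'M[R]_(\sum_(l < N) ni l).

Lemma SED_ge0 c (X : MM) (l : 'I_N) : SED dist c gamma X -> 0 <= c.
Proof. by move=> /(_ l l) /(le_trans (opnorm_ge0 _)); rewrite pmulr_lge0 ?expR_gt0. Qed.

Lemma SED_away_ge0 i c (X : MM) : SED_away dist i c gamma X -> 0 <= c.
Proof. by move=> /(_ i i) /(le_trans (opnorm_ge0 _)); rewrite pmulr_lge0 ?expR_gt0. Qed.

Lemma SED_mulmx c1 c2 (X Y : MM) : SED dist c1 gamma X -> SED dist c2 gamma Y ->
  SED dist (N%:R * c1 * c2) gamma (X *m Y).
Proof.
move=> sedX sedY l j.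
have term_le a : opnorm (blk X l a *m blk Y a j) <=
    c1 * c2 * expR (- (gamma * dist l j)).
  apply: le_trans (opnorm_mulmx _ _) _.
  apply: le_trans (ler_pM (opnorm_ge0 _) (opnorm_ge0 _) (sedX l a) (sedY a j)) _.
  rewrite mulrACA ler_wpM2l ?mulr_ge0 ?(SED_ge0 l sedX) ?(SED_ge0 j sedY) //.
  exact: expRN_mul_le.
rewrite blk_mulmx; apply: le_trans (opnorm_sum _ _) _.
apply: le_trans (ler_sum _ (fun a _ => term_le a)) _.
by rewrite sumr_const card_ord -!mulrA mulr_natl.
Qed.

Lemma SED_exprS c (X : MM) k : SED dist c gamma X ->
  SED dist (N%:R ^+ k * c ^+ k.+1) gamma (X ^+ k.+1).
Proof.
move=> sedX; elim: k => [|k IHk]; first by rewrite expr0 mul1r !expr1.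
have -> : N%:R ^+ k.+1 * c ^+ k.+2 = N%:R * (N%:R ^+ k * c ^+ k.+1) * c.
  by rewrite !exprS; ring.
by rewrite [X ^+ k.+2]exprSr; exact: SED_mulmx.
Qed.

Lemma max_dist_le i a b l j :
  Num.max (dist i l) (dist i j) <= dist a l + Num.max (dist i a) (dist i b) + dist b j.
Proof.
have := dist_triangle i a l; have := dist_triangle i b j.
have := dist_ge0 a l; have := dist_ge0 b j.
have : dist i a <= Num.max (dist i a) (dist i b) by rewrite le_max lexx.
have : dist i b <= Num.max (dist i a) (dist i b) by rewrite le_max lexx orbT.
by rewrite ge_max => *; apply/andP; split; lra.
Qed.

Lemma SED_away_conj i cA cM cB (A M B : MM) :
  SED dist cA gamma A -> SED_away dist i cM gamma M -> SED dist cB gamma B ->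
  SED_away dist i (N%:R ^+ 2 * (cA * cM * cB)) gamma (A^T *m M *m B).
Proof.
move=> sedA sedM sedB l j.
set E := expR (- (gamma * Num.max (dist i l) (dist i j))).
have term_le a b :
    opnorm ((blk A a l)^T *m blk M a b *m blk B b j) <= cA * cM * cB * E.
  apply: le_trans (opnorm_trmx_mul3 _ _ _) _.
  have cA_ge0 := SED_ge0 l sedA; have cB_ge0 := SED_ge0 j sedB.
  have cM_ge0 := SED_away_ge0 sedM.
  apply: le_trans (ler_pM _ _ (ler_pM _ _ (sedA a l) (sedM a b)) (sedB b j)) _;
    rewrite ?mulr_ge0 ?opnorm_ge0 //.
  set e1 := expR _; set e2 := expR _; set e3 := expR _.
  have -> : cA * e1 * (cM * e2) * (cB * e3) = cA * cM * cB * (e1 * e2 * e3) by ring.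
  rewrite ler_wpM2l ?mulr_ge0 //.
  apply: le_trans (ler_wpM2r (expR_ge0 _) (expRN_mul_le gamma_ge0 (lexx _))) _.
  exact: expRN_mul_le (max_dist_le _ _ _ _ _).
have row_le b : opnorm (blk (A^T *m M) l b *m blk B b j) <=
    N%:R * (cA * cM * cB * E).
  rewrite blk_mulmx mulmx_suml; apply: le_trans (opnorm_sum _ _) _.
  under eq_bigr do rewrite blk_trmx.
  apply: le_trans (ler_sum _ (fun a _ => term_le a b)) _.
  by rewrite sumr_const card_ord mulr_natl.
rewrite blk_mulmx; apply: le_trans (opnorm_sum _ _) _.
apply: le_trans (ler_sum _ (fun b _ => row_le b)) _.
rewrite sumr_const card_ord -[(N%:R * _) *+ N]mulr_natl.
by rewrite le_eqVlt; apply/orP; left; apply/eqP; ring.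
Qed.

Lemma SED_away_conj_expr i c cM (L M : MM) k :
  SED dist c gamma L -> SED_away dist i cM gamma M ->
  SED_away dist i (cM * (N%:R * c) ^+ (2 * k)) gamma ((L ^+ k)^T *m M *m L ^+ k).
Proof.
move=> sedL sedM; case: k => [|k].
  by rewrite !expr0 trmx1 mul1mx mulmx1 mulr1.
have := SED_away_conj (SED_exprS k sedL) sedM (SED_exprS k sedL).
by congr SED_away; rewrite mulnC exprM exprMn [N%:R ^+ k.+1]exprS; ring.
Qed.

End SpatialDecay.

Section Stability.
Variables (R : realType) (n : nat) (L : 'M[R]_n) (tau rho : R).

Lemma opnorm_conj_expr_le (Q : 'M[R]_n) k : tr_stable tau rho L ->
  opnorm ((L ^+ k)^T *m Q *m L ^+ k) <= opnorm Q * tau ^+ 2 * expR (- (2 * rho)) ^+ k.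
Proof.
move=> stabL; apply: le_trans (opnorm_trmx_mul3 _ _ _) _.
set e := expR (- (rho * k%:R)).
have -> : expR (- (2 * rho)) ^+ k = e * e.
  by rewrite -expRM_natl -expRD; congr expR; ring.
apply: (@le_trans _ _ (tau * e * opnorm Q * (tau * e))).
  by rewrite ler_pM ?mulr_ge0 ?opnorm_ge0 // ler_wpM2r ?opnorm_ge0.
by rewrite le_eqVlt; apply/orP; left; apply/eqP; ring.
Qed.

Lemma lyapunov_unfold (M P : 'M[R]_n) : P = L^T *m P *m L + M -> forall K,
  P = (L ^+ K)^T *m P *m L ^+ K + \sum_(k < K) (L ^+ k)^T *m M *m L ^+ k.
Proof.
move=> eqP; elim=> [|K IHK]; first by rewrite expr0 trmx1 mul1mx mulmx1 big_ord0 addr0.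
have unfold_once : (L ^+ K)^T *m P *m L ^+ K =
    (L ^+ K.+1)^T *m P *m L ^+ K.+1 + (L ^+ K)^T *m M *m L ^+ K.
  rewrite {1}eqP mulmxDr mulmxDl; congr (_ + _).
  by rewrite exprS -mulmxE trmx_mul !mulmxA.
by rewrite {1}IHK unfold_once big_ord_recr /= -addrA [_ + (L ^+ K)^T *m _ *m _]addrC.
Qed.

End Stability.

Lemma opnorm_blk_lyapunov_le (R : realType) (N : nat) (ni : 'I_N -> nat)
    (L M P : 'M[R]_(\sum_(l < N) ni l)) :
  P = L^T *m P *m L + M -> forall K l j,
  opnorm (blk P l j) <= \sum_(k < K) opnorm (blk ((L ^+ k)^T *m M *m L ^+ k) l j) +
    opnorm (blk ((L ^+ K)^T *m P *m L ^+ K) l j).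
Proof.
move=> eqP K l j; have -> : blk P l j = \sum_(k < K) blk ((L ^+ k)^T *m M *m L ^+ k) l j +
    blk ((L ^+ K)^T *m P *m L ^+ K) l j.
  by rewrite {1}(lyapunov_unfold eqP K) addrC /blk submxblockD submxblock_sum.
by apply: le_trans (opnormD _ _) _; rewrite lerD2r opnorm_sum.
Qed.

Section GeometricBounds.
Variable R : realType.
Local Open Scope classical_set_scope.

Lemma sum_expr_le_twice (y : R) m : 0 <= y -> ((0 < m)%N -> 2 <= y) ->
  \sum_(k < m.+1) y ^+ k <= 2 * y ^+ m.
Proof.
move=> y_ge0; elim: m => [|m IHm] y_ge2; first by rewrite big_ord1 expr0 mulr1 ler1n.
have y2 : 2 <= y by exact: y_ge2.
rewrite big_ord_recr /= exprS.
by have := IHm (fun _ => y2); have := exprn_ge0 m y_ge0; nra.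
Qed.

Lemma subr_sum_expr_nat (q : R) m n : (m <= n)%N ->
  (1 - q) * \sum_(m <= k < n) q ^+ k = q ^+ m - q ^+ n.
Proof.
elim: n => [|n IHn]; first by rewrite leqn0 => /eqP ->; rewrite big_geq // mulr0 subrr.
rewrite leq_eqVlt => /orP [/eqP -> | lt_mn]; first by rewrite big_geq // mulr0 subrr.
by rewrite big_nat_recr //= mulrDr IHn // exprSr; ring.
Qed.

Lemma sum_expr_nat_le (q : R) m n : 0 <= q < 1 ->
  \sum_(m <= k < n) q ^+ k <= q ^+ m / (1 - q).
Proof.
case/andP=> q_ge0 q_lt1; have q1_gt0 : 0 < 1 - q by rewrite subr_gt0.
have [le_mn | lt_nm] := leqP m n; last first.
  by rewrite big_geq ?(ltnW lt_nm) // divr_ge0 ?exprn_ge0 // ltW.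
by rewrite ler_pdivlMr // mulrC subr_sum_expr_nat // lerBlDr lerDl exprn_ge0.
Qed.

Lemma sum_le_head_tail (f : nat -> R) (c y a q : R) m K :
  0 <= c -> 0 <= y -> ((0 < m)%N -> 2 <= y) -> 0 <= a -> 0 <= q < 1 ->
  (forall k, f k <= c * y ^+ k) -> (forall k, f k <= a * q ^+ k) -> (m < K)%N ->
  \sum_(k < K) f k <= 2 * c * y ^+ m + a * (q ^+ m.+1 / (1 - q)).
Proof.
move=> c_ge0 y_ge0 y_ge2 a_ge0 q01 f_head f_tail lt_mK.
rewrite -(big_mkord xpredT) (@big_cat_nat _ _ _ m.+1) //=; apply: lerD.
  apply: le_trans (ler_sum _ (fun k _ => f_head k)) _.
  by rewrite -mulr_sumr big_mkord [2 * c]mulrC -mulrA ler_wpM2l ?sum_expr_le_twice.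
apply: le_trans (ler_sum _ (fun k _ => f_tail k)) _.
by rewrite -mulr_sumr ler_wpM2l ?sum_expr_nat_le.
Qed.

Lemma le_of_vanishing_geometric (a b Z q : R) (K0 : nat) : 0 <= Z -> 0 <= q < 1 ->
  (forall K, (K0 <= K)%N -> a <= b + Z * q ^+ K) -> a <= b.
Proof.
move=> Z_ge0 /andP [q_ge0 q_lt1] a_le; apply/ler_addgt0Pr => eps eps_gt0.
have Z1_gt0 : 0 < Z + 1 by rewrite ltr_wpDl.
have q_abs : `|q| < 1 by rewrite ger0_norm.
near \oo => K.
apply: le_trans (a_le K _) _; first by near: K; exact: nbhs_infty_ge.
have qK : q ^+ K <= eps / (Z + 1).
  rewrite -[q ^+ K]ger0_norm ?exprn_ge0 // ltW //.
  by near: K; exact: cvgr0_norm_lt (cvg_expr q_abs) _ (divr_gt0 eps_gt0 Z1_gt0).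
rewrite lerD2l; apply: le_trans (ler_wpM2l Z_ge0 qK) _.
by rewrite mulrA ler_pdivrMr //; nra.
Unshelve. all: by end_near. Qed.

Lemma truncn_half_bounds (t : R) : 0 <= t ->
  2 * (Num.truncn (t / 2))%:R <= t < 2 * (Num.truncn (t / 2)).+1%:R.
Proof.
move=> t_ge0; have /andP [lo hi] := truncn_itv (divr_ge0 t_ge0 (ler0n R 2)).
by apply/andP; split; lra.
Qed.

Lemma expr_truncn_half_le (x rho t : R) : 1 <= x -> 0 <= t ->
  x ^+ (2 * Num.truncn (t / 2)) * expR (- (t * (rho + ln x))) <= expR (- (rho * t)).
Proof.
move=> x_ge1 t_ge0; have /andP [lo _] := truncn_half_bounds t_ge0.
have x_gt0 : 0 < x by exact: lt_le_trans ltr01 x_ge1.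
rewrite -{1}(lnK x_gt0) -expRM_natl -expRD ler_expR natrM.
by have := ln_ge0 x_ge1; nra.
Qed.

Lemma expR_truncn_half_le (rho t : R) : 0 < rho -> 0 <= t ->
  expR (- (2 * rho)) ^+ (Num.truncn (t / 2)).+1 <= expR (- (rho * t)).
Proof.
move=> rho_gt0 t_ge0; have /andP [_ hi] := truncn_half_bounds t_ge0.
by rewrite -expRM_natl ler_expR; nra.
Qed.

Lemma head_tail_decay_le (c a x rho t : R) :
  0 <= c -> 0 <= a -> 1 <= x -> 0 < rho -> 0 <= t ->
  2 * (c * expR (- (t * (rho + ln x)))) * (x ^+ 2) ^+ Num.truncn (t / 2) +
    a * (expR (- (2 * rho)) ^+ (Num.truncn (t / 2)).+1 / (1 - expR (- (2 * rho)))) <=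
  (a / (1 - expR (- (2 * rho))) + 2 * c) * expR (- (rho * t)).
Proof.
move=> c_ge0 a_ge0 x_ge1 rho_gt0 t_ge0.
have q_lt1 : expR (- (2 * rho)) < 1 by rewrite expR_lt1 oppr_lt0 mulr_gt0.
rewrite [X in _ <= X]mulrDl [X in _ <= X]addrC; apply: lerD.
  rewrite -exprM -!mulrA ler_wpM2l // ler_wpM2l //.
  by rewrite mulrC expr_truncn_half_le.
rewrite mulrA mulrAC; apply: ler_wpM2l; last exact: expR_truncn_half_le.
by rewrite divr_ge0 // subr_ge0 ltW.
Qed.

End GeometricBounds.

Theorem lemma1 (R : realType) (N : nat) (e : rel 'I_N) (ni : 'I_N -> nat)
  (i : 'I_N) (tau rho cL cM gamma : R)
  (L M P : 'M[R]_(\sum_(l < N) ni l)) :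
  (0 < N)%N ->
  symmetric e ->
  (forall a b : 'I_N, connect e a b) ->
  1 <= tau -> 0 < rho -> 1 <= cL -> 0 < gamma ->
  tr_stable tau rho L ->
  SED (graph_dist e) cL gamma L ->
  SED_away (graph_dist e) i cM gamma M ->
  P = L^T *m P *m L + M ->
  SED_away (graph_dist e) i
    (opnorm M * tau ^+ 2 / (1 - expR (- (2 * rho))) + 2 * cM)
    (rho * gamma / (rho + ln (N%:R * cL)))
    P.
Proof.
move=> N_gt0 _ connected tau_ge1 rho_gt0 cL_ge1 gamma_gt0 stabL sedL sedM eqP l j.
set x := N%:R * cL; set D := Num.max _ _; set t := gamma * D / (rho + ln x).
set m := Num.truncn (t / 2); set q := expR (- (2 * rho)).
have x_ge1 : 1 <= x by rewrite -[1]mulr1 ler_pM ?ler1n.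
have t_ge0 : 0 <= t by rewrite divr_ge0 ?mulr_ge0 ?le_max ?ler0n ?ltW ?ltr_wpDr ?ln_ge0.
have gammaD : gamma * D = t * (rho + ln x) by rewrite divfK // gt_eqF // ltr_wpDr ?ln_ge0.
have -> : rho * gamma / (rho + ln x) * D = rho * t by rewrite /t; ring.
have q01 : 0 <= q < 1 by rewrite expR_ge0 expR_lt1 oppr_lt0 mulr_gt0.
have x2_ge2 : (0 < m)%N -> 2 <= x ^+ 2.
  have [N_gt1 _ | N_le1] := ltnP 1 N.
    have : 2 <= x by rewrite -[2]mulr1 ler_pM ?(ler_nat R 2).
    by rewrite expr2; nra.
  by rewrite /m /t /D !(graph_dist_le1 _ _ _ _ N_gt0 N_le1) maxxx mulr0 !mul0r truncn0.
have head_le k := SED_away_conj_expr (fun _ _ => ler0n _ _)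
  (graph_dist_triangle R connected)
  (ltW gamma_gt0) k sedL sedM l j.
have tail_le k Q := le_trans (opnorm_blk_le _ l j) (opnorm_conj_expr_le Q k stabL).
have Mtau_ge0 Q : 0 <= opnorm Q * tau ^+ 2.
  by rewrite mulr_ge0 ?opnorm_ge0 ?exprn_ge0 // (le_trans ler01).
apply: (le_of_vanishing_geometric (Z := opnorm P * tau ^+ 2) (K0 := m.+1) _ q01)
  => [|K lt_mK].
  exact: Mtau_ge0.
apply: le_trans (opnorm_blk_lyapunov_le eqP K l j) _; apply: lerD; last exact: tail_le.
apply: le_trans (sum_le_head_tail (c := cM * expR (- (gamma * D))) (y := x ^+ 2)
  (a := opnorm M * tau ^+ 2) _ _ x2_ge2 _ q01 _ (fun k => tail_le k M) lt_mK) _.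
- by rewrite mulr_ge0 ?expR_ge0 // (SED_away_ge0 sedM).
- exact: sqr_ge0.
- exact: Mtau_ge0.
- by move=> k; rewrite -exprM mulrAC; exact: head_le.
by rewrite gammaD head_tail_decay_le ?(SED_away_ge0 sedM).
Qed.
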